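(* Let $p(x,y)$ be a real polynomial with $p(0,0)=0$, $\nabla p(0,0)=(0,0)$, $\dim\operatorname{Co}N_p=2$, such that for every $A\in\mathbb{N}^2$ the main $A$-quasi-homogeneous form of $p$ is nonnegative on $\mathbb{R}^2$. Let $A=(A_1,A_2)\in\mathcal{A}_p$, let $x^{\chi_1}y^{\eta_1}$ be the monomial of the main term of $\varphi_2^A$, and suppose that for every $u_0\in U_p(A)$ one has $g_2^A(u_0)\neq0$ and the system $x\neq0$, $y\neq0$, $x^{-A_2}y^{A_1}=u_0$, $x^{\chi_1}y^{\eta_1}g_2^A(u_0)<0$ has no real solution. Then for all $(x,y)$ with $\varphi_1^A(x,y)=0$, $x\neq0$, $y\neq0$ one has $\varphi_2^A(x,y)>0$.
   Context: $\mathbb{N}=\{1,2,\dots\}$; $\mathbb{N}_0^2$ is the set of $(A_1,A_2)\in\mathbb{N}^2$ with $\gcd(A_1,A_2)=1$. $N_p$ is the support of $p$ and $\operatorname{Co}N_p$ its convex hull. For $A\in\mathbb{N}^2$ the main $A$-quasi-homogeneous form of $p$ is the sum of the terms of $p$ whose exponent vectors $k$ minimize $\langle A,k\rangle$ over $N_p$. For $A\in\mathbb{N}_0^2$, with $B_1^A<B_2^A<\dots$ the distinct values of $\langle A,k\rangle$ on $N_p$, $\varphi_i^A$ is the sum of terms of $p$ with $\langle A,k\rangle=B_i^A$. For such a form $\sum_i c_ix^{\gamma_i}y^{\delta_i}$ ($c_i\ne0$, $\gamma_1>\gamma_2>\dots$), its main term is $c_1x^{\gamma_1}y^{\delta_1}$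 and its characteristic polynomial is $\sum_ic_iu^{(\gamma_1-\gamma_i)/A_2}$; $g_1^A,g_2^A$ are those of $\varphi_1^A,\varphi_2^A$. $\mathcal{A}_p$ is the set of $A\in\mathbb{N}_0^2$ such that $\varphi_1^A$ has at least three terms, $g_1^A\ge0$ on $\mathbb{R}$, and $g_1^A$ has a real root; $U_p(A)$ is the set of real roots of $g_1^A$. *)

(* A real polynomial p(x,y) is represented as an element of
   {poly {poly R}}: p = \sum_i (p`_i).[y] * x^i, so the coefficient of
   x^i y^j is (p`_i)`_j.  R is an arbitrary realType (a model of the reals). *)
From HB Require Import structures.
From mathcomp Require Import all_boot all_order all_algebra.
From mathcomp Require Import reals.
Set Implicit Arguments. Unset Strict Implicit. Unset Printing Implicit Defensive.
Import Order.TTheory GRing.Theory Num.Theory.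
Local Open Scope ring_scope.

Section Defs.
Variable R : realType.
Implicit Types (p : {poly {poly R}}) (A k : nat * nat).

Definition pcoef p k : R := (p`_k.1)`_k.2.

Definition peval p (x y : R) : R := (map_poly (fun q : {poly R} => q.[y]) p).[x].

Definition supp p : seq (nat * nat) :=
  [seq k <- [seq (i, j) | i <- iota 0 (size p), j <- iota 0 (size p`_i)]
     | pcoef p k != 0].

(* dim Co N_p = 2 : N_p contains three affinely independent points *)
Definition hull_dim2 p : Prop :=
  exists k1 k2 k3, [/\ k1 \in supp p, k2 \in supp p, k3 \in supp p &
    ((k2.1%:Z - k1.1%:Z) * (k3.2%:Z - k1.2%:Z)
      - (k2.2%:Z - k1.2%:Z) * (k3.1%:Z - k1.1%:Z) != 0)%R].

Definition wdeg A k : nat := (A.1 * k.1 + A.2 * k.2)%N.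

Definition levels p A : seq nat := sort leq (undup [seq wdeg A k | k <- supp p]).

Definition lev p A (i : nat) : nat := nth 0%N (levels p A) i.-1.

Definition lev_supp p A i : seq (nat * nat) :=
  [seq k <- supp p | wdeg A k == lev p A i].

Definition phi p A i (x y : R) : R :=
  \sum_(k <- lev_supp p A i) pcoef p k * x ^+ k.1 * y ^+ k.2.

Definition main_form p A (x y : R) : R :=
  \sum_(k <- supp p | all (fun l => wdeg A k <= wdeg A l)%N (supp p))
     pcoef p k * x ^+ k.1 * y ^+ k.2.

(* exponent (chi, eta) of the main term of phi_i^A: the term with the largest
   power of x (unique in a quasi-homogeneous form) *)
Definition main_xexp p A i : nat := \max_(k <- lev_supp p A i) k.1.
Definition main_yexp p A i : nat :=
  \max_(k <- lev_supp p A i | k.1 == main_xexp p A i) k.2.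

Definition charpoly p A i : {poly R} :=
  \sum_(k <- lev_supp p A i)
     pcoef p k *: 'X^((main_xexp p A i - k.1) %/ A.2).

Definition inN02 A : bool := [&& 0 < A.1, 0 < A.2 & coprime A.1 A.2]%N.

Definition inAp p A : Prop :=
  [/\ inN02 A, (3 <= size (lev_supp p A 1))%N,
      (forall u : R, 0 <= (charpoly p A 1).[u])
    & exists u : R, root (charpoly p A 1) u].

Definition Up p A (u : R) : bool := root (charpoly p A 1) u.

End Defs.

(* The level-i part of p is A-quasi-homogeneous, so for x <> 0 it factors as
   phi_i^A(x,y) = x^chi y^eta g_i^A(x^-A2 y^A1): two exponents (k1,k2), (m,n)
   of the same weighted degree satisfy A1 (m - k1) = A2 (k2 - n), and since
   A1, A2 are coprime both sides are A1 A2 q for some q.  Hence phi_1^A(x,y) = 0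
   with xy <> 0 makes u0 = x^-A2 y^A1 a root of g_1^A, and then
   phi_2^A(x,y) = x^chi y^eta g_2^A(u0) is nonzero and, by hypothesis, not
   negative. *)
From HB Require Import structures.
From mathcomp Require Import all_boot all_order all_algebra.
From mathcomp Require Import reals.
From mathcomp Require Import zify ring.
Import Order.TTheory GRing.Theory Num.Theory.
Local Open Scope ring_scope.

Lemma bigmax_seq_attained (I : eqType) (r : seq I) (F : I -> nat) :
  r != [::] -> exists2 i, i \in r & (\max_(j <- r) F j)%N = F i.
Proof.
elim: r => // a r IHr _; rewrite big_cons.
have [->|r_neq0] := eqVneq r [::].
  by exists a; rewrite ?mem_head // big_nil maxn0.
have [i ir ->] := IHr r_neq0.
have [_|_] := leqP (F a) (F i).
  by exists i; rewrite // in_cons ir orbT.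
by exists a; rewrite ?mem_head.
Qed.

Lemma coprime_weight_shift (a1 a2 m n k1 k2 : nat) :
  (0 < a2)%N -> coprime a1 a2 -> (k1 <= m)%N ->
  (a1 * m + a2 * n = a1 * k1 + a2 * k2)%N ->
  exists q, (m = k1 + a2 * q)%N /\ (k2 = n + a1 * q)%N.
Proof.
move=> a2_gt0 co_a k1_le_m same_deg.
have n_le_k2 : (n <= k2)%N by nia.
have balance : (a1 * (m - k1) = a2 * (k2 - n))%N by nia.
have /dvdnP [q m_k1] : (a2 %| m - k1)%N.
  by rewrite -(@Gauss_dvdr _ a1) ?balance ?dvdn_mulr // coprime_sym.
exists q; split; first by nia.
have : (a2 * (k2 - n) = a2 * (a1 * q))%N by rewrite -balance m_k1; lia.
by move/eqP; rewrite eqn_mul2l gtn_eqF //= => /eqP <-; rewrite subnKC.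
Qed.

Section QuasiHomogeneous.

Variables (A : nat * nat) (s : seq (nat * nat)) (B : nat).
Hypotheses (A2_gt0 : (0 < A.2)%N) (coprimeA : coprime A.1 A.2)
  (wdeg_s : {in s, forall k, wdeg A k = B}).

Let M := (\max_(k <- s) k.1)%N.
Let N := (\max_(k <- s | k.1 == M) k.2)%N.

Lemma top_exponent_mem : s != [::] -> (M, N) \in s.
Proof.
move=> s_neq0.
have [k0 k0s M_k0] : exists2 k0, k0 \in s & M = k0.1 :=
  bigmax_seq_attained _ _ _ s_neq0.
have same_y k : k \in s -> k.1 = M -> k.2 = k0.2.
  move=> ks k1M; have := wdeg_s _ ks; rewrite -(wdeg_s _ k0s) /wdeg k1M M_k0.
  by move/addnI/eqP; rewrite eqn_mul2l gtn_eqF //= => /eqP.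
have N_k0 : N = k0.2.
  apply/eqP; rewrite eqn_leq; apply/andP; split.
    by apply/bigmax_leqP_seq => k ks /eqP k1M; rewrite same_y.
  by apply: (leq_bigmax_seq k0) => //=; rewrite M_k0.
by rewrite N_k0 M_k0 -surjective_pairing.
Qed.

Lemma exponent_shift k : k \in s ->
  exists q, (M = k.1 + A.2 * q)%N /\ (k.2 = N + A.1 * q)%N.
Proof.
move=> ks; have top_s : (M, N) \in s by apply: top_exponent_mem; case: (s) ks.
apply: coprime_weight_shift => //; first exact: leq_bigmax_seq.
by have := wdeg_s _ top_s; rewrite -(wdeg_s _ ks).
Qed.

Lemma quasi_homogeneous_factor (F : fieldType) (c : nat * nat -> F) (x y : F) :
  x != 0 ->
  \sum_(k <- s) c k * x ^+ k.1 * y ^+ k.2 =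
  x ^+ M * y ^+ N * (\sum_(k <- s) c k *: 'X^((M - k.1) %/ A.2)).[x ^- A.2 * y ^+ A.1].
Proof.
move=> x_neq0; rewrite horner_sum big_distrr /=; apply: eq_big_seq => k ks.
have [q [M_k k2_N]] := exponent_shift k ks.
rewrite hornerZ hornerXn M_k addKn mulKn // k2_N.
rewrite !exprD exprMn exprVn -!exprM.
have xq_neq0 : x ^+ (A.2 * q) != 0 by rewrite expf_neq0.
by field.
Qed.

End QuasiHomogeneous.

Lemma phi_charpolyE (R : realType) (p : {poly {poly R}}) (A : nat * nat) i (x y : R) :
  inN02 A -> x != 0 ->
  phi p A i x y = x ^+ main_xexp p A i * y ^+ main_yexp p A i *
                  (charpoly p A i).[x ^- A.2 * y ^+ A.1].
Proof.
case/and3P=> _ A2_gt0 coprimeA x_neq0.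
rewrite /phi /charpoly /main_yexp /main_xexp.
have level_wdeg : {in lev_supp p A i, forall k, wdeg A k = lev p A i}.
  by move=> k; rewrite mem_filter => /andP [/eqP].
exact: (quasi_homogeneous_factor _ _ _ A2_gt0 coprimeA level_wdeg).
Qed.

Theorem mainTheorem8 (R : realType) (p : {poly {poly R}}) (A : nat * nat) :
  peval p 0 0 = 0 ->
  peval (p^`()) 0 0 = 0 ->
  peval (map_poly (fun q : {poly R} => q^`()) p) 0 0 = 0 ->
  hull_dim2 p ->
  (forall A' : nat * nat, (0 < A'.1)%N -> (0 < A'.2)%N ->
     forall x y : R, 0 <= main_form p A' x y) ->
  inAp p A ->
  (forall u0 : R, Up p A u0 ->
     (charpoly p A 2).[u0] != 0 /\
     ~ (exists x y : R, [/\ x != 0, y != 0, x ^- A.2 * y ^+ A.1 = u0 &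
          x ^+ main_xexp p A 2 * y ^+ main_yexp p A 2 * (charpoly p A 2).[u0] < 0])) ->
  forall x y : R, phi p A 1 x y = 0 -> x != 0 -> y != 0 -> 0 < phi p A 2 x y.
Proof.
move=> _ _ _ _ _ [NA _ _ _] hypU x y phi1_eq0 x_neq0 y_neq0.
have monomial_neq0 i : x ^+ main_xexp p A i * y ^+ main_yexp p A i != 0.
  by rewrite mulf_neq0 ?expf_neq0.
have u0_root : Up p A (x ^- A.2 * y ^+ A.1).
  apply/eqP; move: phi1_eq0; rewrite phi_charpolyE // => /eqP.
  by rewrite mulf_eq0 (negPf (monomial_neq0 1%N)) => /eqP.
have [g2_neq0 no_negative] := hypU _ u0_root.
rewrite phi_charpolyE // lt_def mulf_neq0 //= leNgt.
by apply/negP => phi2_lt0; apply: no_negative; exists x, y.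
Qed.
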